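(* For integers $k\ge1$ let $Z_k$ have the Gamma distribution with shape $k$ and rate $k$, and for $\delta\in(0,1)$ let $V(k,\delta)=\inf\{y: \mathbb P(|Z_k-1|\le y)\ge 1-\delta/2\}$ be the $(1-\delta/2)$-quantile of $|Z_k-1|$. There exist universal constants $0<c_1\le 1$ and $0<c_2\le 2$ such that for all integers $k\ge1$ and all $\delta\in(0,1)$, $$V(k,\delta)\ge c_1\Bigl(\sqrt{\frac{0\vee\log(c_2/\delta)}{k}}+\frac{\log(c_2/\delta)}{k}\Bigr).$$ *)

From Stdlib Require Import Reals.
From Coquelicot Require Import Coquelicot.
Open Scope R_scope.

Definition gamma_kk_density (k : nat) (x : R) : R :=
  if Rle_dec x 0 then 0
  else (INR k) ^ k * x ^ (k - 1) * exp (- INR k * x) / INR (Factorial.fact (k - 1)).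

(* P(|Z_k - 1| <= y) where Z_k ~ Gamma(shape k, rate k).
   For y < 0 the event is empty; for y >= 0 it is the event
   Z_k in [1-y, 1+y], i.e. (since Z_k > 0 a.s.) Z_k in [max 0 (1-y), 1+y]. *)
Definition prob_abs_dev_le (k : nat) (y : R) : R :=
  if Rlt_dec y 0 then 0
  else RInt (gamma_kk_density k) (Rmax 0 (1 - y)) (1 + y).

Definition V (k : nat) (delta : R) : Rbar :=
  Glb_Rbar (fun y => prob_abs_dev_le k y >= 1 - delta / 2).

From Stdlib Require Import Reals Factorial Lra Lia Psatz.
From Coquelicot Require Import Coquelicot.
Open Scope R_scope.

(* The upper tail P(Z_k > 1 + y) is bounded below by the mass of a window
   [1 + y, 1 + y + w].  On it, Stirling's bound
   n! e^n sqrt(n + 1) <= (n + 1)^(n + 1) bounds the density of Z_k below by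
   sqrt k exp(-1 - k (t - 1 - ln t) - ln t).  Writing L = log(c2 / delta),
   one takes w = 1/sqrt k and t - 1 - ln t <= (t - 1)^2 / 2 when L <= k
   (Gaussian regime), and w = 1/k and t - 1 - ln t <= t - 1 when L > k
   (exponential regime).  Either way the tail exceeds exp(-4 - L) as soon as
   y < (sqrt(L/k) + L/k) / 16, and exp(-4 - L) = delta / 2 for c2 = 2 e^-4,
   so the (1 - delta/2)-quantile of |Z_k - 1| is at least that bound. *)

Lemma exp_le_exp (x y : R) : x <= y -> exp x <= exp y.
Proof. intros [Hlt | ->]; [now apply Rlt_le, exp_increasing | apply Rle_refl]. Qed.

Lemma ln_le_sub_1 (t : R) : 0 < t -> ln t <= t - 1.
Proof. intros Ht. pose proof (exp_ineq1_le (ln t)) as H. rewrite exp_ln in H; lra. Qed.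

Lemma ln_ge_0 (t : R) : 1 <= t -> 0 <= ln t.
Proof. intros Ht. rewrite <- ln_1. apply ln_le; lra. Qed.

Lemma Rinv_in_0_1 (x : R) : 1 <= x -> 0 < / x <= 1.
Proof.
  intros Hx. split; [apply Rinv_0_lt_compat; lra |].
  rewrite <- Rinv_1. apply Rinv_le_contravar; lra.
Qed.

Lemma ln_1p_ge (u : R) : 0 <= u -> 2 * u / (2 + u) <= ln (1 + u).
Proof.
  intros Hu.
  set (phi := fun x => ln (1 + x) - 2 * x / (2 + x)).
  set (dphi := fun x => x ^ 2 / ((1 + x) * (2 + x) ^ 2)).
  assert (Hd : forall x, 0 <= x -> is_derive phi x (dphi x)).
  { intros x Hx. unfold phi, dphi. auto_derive; [lra | field; lra]. }
  destruct (MVT_gen phi 0 u dphi) as (c & Hc & Hmvt).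
  - intros x Hx. apply Hd. rewrite Rmin_left in Hx; lra.
  - intros x Hx. apply continuity_pt_filterlim.
    apply (ex_derive_continuous (K := R_AbsRing) (V := R_NormedModule)).
    exists (dphi x). apply Hd. rewrite Rmin_left in Hx; lra.
  - rewrite Rmin_left, Rmax_right in Hc by lra.
    assert (Hphi0 : phi 0 = 0).
    { unfold phi. rewrite Rplus_0_r, ln_1. field. }
    assert (0 <= dphi c).
    { unfold dphi. apply Rmult_le_pos; [nra |].
      apply Rlt_le, Rinv_0_lt_compat. nra. }
    assert (0 <= phi u) by nra.
    unfold phi in *. lra.
Qed.

Lemma sub_ln_le_sq (t : R) : 1 <= t -> t - 1 - ln t <= (t - 1) ^ 2 / 2.
Proof.
  intros Ht. set (s := t - 1).
  replace t with (1 + s) by (unfold s; ring).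
  assert (Hs : 0 <= s) by (unfold s; lra).
  pose proof (ln_1p_ge s Hs) as H.
  enough (s - s ^ 2 / 2 <= 2 * s / (2 + s)) by lra.
  apply (Rmult_le_reg_r (2 + s)); [lra |].
  replace (2 * s / (2 + s) * (2 + s)) with (2 * s) by (field; lra). nra.
Qed.

Lemma one_le_mul_ln_succ_sub (a : R) : 0 < a -> 1 <= (a + / 2) * (ln (a + 1) - ln a).
Proof.
  intros Ha. rewrite <- ln_div by lra.
  replace ((a + 1) / a) with (1 + / a) by (field; lra).
  pose proof (ln_1p_ge (/ a) (Rlt_le _ _ (Rinv_0_lt_compat _ Ha))) as H.
  replace (2 * / a / (2 + / a)) with (/ (a + / 2)) in H by (field; lra).
  apply (Rmult_le_compat_l (a + / 2)) in H; [| lra].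
  rewrite Rinv_r in H; lra.
Qed.

Lemma ln_fact_le (n : nat) :
  ln (INR (fact n)) + INR n + ln (INR n + 1) / 2 <= (INR n + 1) * ln (INR n + 1).
Proof.
  induction n as [| n IH].
  - simpl. rewrite Rplus_0_l, ln_1. lra.
  - rewrite fact_simpl, mult_INR, ln_mult, S_INR
      by (apply lt_0_INR; first [lia | apply lt_O_fact]).
    pose proof (one_le_mul_ln_succ_sub (INR n + 1) ltac:(pose proof (pos_INR n); lra)).
    nra.
Qed.

Definition poisson_pmf (j : nat) (x : R) : R := x ^ j / INR (fact j) * exp (- x).

Definition poisson_cdf (n : nat) (x : R) : R := sum_f_R0 (fun j => poisson_pmf j x) n.

(* The density [gamma_kk_density] without its guard at x <= 0, hence smooth. *)
Definition gamma_pdf (k : nat) (x : R) : R :=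
  INR k ^ k * x ^ (k - 1) * exp (- INR k * x) / INR (fact (k - 1)).

(* [gamma_sf k x] is P(Z_k > x) for x >= 0: the Gamma-Poisson duality. *)
Definition gamma_sf (k : nat) (x : R) : R := poisson_cdf (k - 1) (INR k * x).

Lemma poisson_pmf_ge0 (j : nat) (x : R) : 0 <= x -> 0 <= poisson_pmf j x.
Proof.
  intros Hx. unfold poisson_pmf.
  apply Rmult_le_pos; [| apply Rlt_le, exp_pos].
  apply Rmult_le_pos; [now apply pow_le |].
  apply Rlt_le, Rinv_0_lt_compat, INR_fact_lt_0.
Qed.

Lemma is_derive_poisson_pmf_0 (x : R) :
  is_derive (poisson_pmf 0) x (- poisson_pmf 0 x).
Proof. unfold poisson_pmf. auto_derive; [easy |]. simpl. field. Qed.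

Lemma is_derive_poisson_pmf_S (j : nat) (x : R) :
  is_derive (poisson_pmf (S j)) x (poisson_pmf j x - poisson_pmf (S j) x).
Proof.
  unfold poisson_pmf. auto_derive; [easy |].
  change (fact j + j * fact j)%nat with (fact (S j)).
  rewrite fact_simpl, mult_INR.
  change (match j with 0%nat => 1 | S _ => INR j + 1 end) with (INR (S j)).
  pose proof (INR_fact_neq_0 j). pose proof (not_0_INR (S j) ltac:(lia)).
  change (x ^ S j) with (x * x ^ j). field. auto.
Qed.

Lemma is_derive_poisson_cdf (n : nat) (x : R) :
  is_derive (poisson_cdf n) x (- poisson_pmf n x).
Proof.
  induction n as [| n IH]; [apply is_derive_poisson_pmf_0 |].
  replace (- poisson_pmf (S n) x)
    with (plus (- poisson_pmf n x) (poisson_pmf n x - poisson_pmf (S n) x))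
    by (unfold plus; simpl; ring).
  apply (is_derive_plus (K := R_AbsRing) (V := R_NormedModule)
           (poisson_cdf n) (poisson_pmf (S n))); [exact IH |].
  apply is_derive_poisson_pmf_S.
Qed.

Lemma poisson_cdf_0 (n : nat) : poisson_cdf n 0 = 1.
Proof.
  unfold poisson_cdf, poisson_pmf.
  induction n as [| n IH]; simpl sum_f_R0.
  - rewrite Ropp_0, exp_0. simpl. field.
  - rewrite IH. simpl pow. unfold Rdiv. rewrite !Rmult_0_l. apply Rplus_0_r.
Qed.

Lemma gamma_sf_0 (k : nat) : gamma_sf k 0 = 1.
Proof. unfold gamma_sf. rewrite Rmult_0_r. apply poisson_cdf_0. Qed.

Lemma gamma_sf_ge0 (k : nat) (x : R) : 0 <= x -> 0 <= gamma_sf k x.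
Proof.
  intros Hx. apply cond_pos_sum. intros j. apply poisson_pmf_ge0.
  apply Rmult_le_pos; [apply pos_INR | exact Hx].
Qed.

Lemma gamma_pdf_ge0 (k : nat) (x : R) : 0 <= x -> 0 <= gamma_pdf k x.
Proof.
  intros Hx. unfold gamma_pdf.
  apply Rmult_le_pos; [| apply Rlt_le, Rinv_0_lt_compat, INR_fact_lt_0].
  apply Rmult_le_pos; [| apply Rlt_le, exp_pos].
  apply Rmult_le_pos; apply pow_le; [apply pos_INR | exact Hx].
Qed.

Lemma is_derive_gamma_sf (k : nat) (x : R) :
  (1 <= k)%nat -> is_derive (gamma_sf k) x (- gamma_pdf k x).
Proof.
  intros Hk. destruct k as [| n]; [lia |].
  unfold gamma_sf, gamma_pdf. rewrite Nat.sub_succ, Nat.sub_0_r.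
  set (K := INR (S n)).
  replace (- (K ^ S n * x ^ n * exp (- K * x) / INR (fact n)))
    with (K * - poisson_pmf n (K * x)).
  - apply (is_derive_comp (poisson_cdf n) (fun y => K * y)).
    + apply is_derive_poisson_cdf.
    + auto_derive; [easy | ring].
  - unfold poisson_pmf. rewrite Rpow_mult_distr.
    change (K ^ S n) with (K * K ^ n). replace (- (K * x)) with (- K * x) by ring.
    field. apply INR_fact_neq_0.
Qed.

Lemma is_RInt_gamma_pdf (k : nat) (a b : R) :
  (1 <= k)%nat -> is_RInt (gamma_pdf k) a b (gamma_sf k a - gamma_sf k b).
Proof.
  intros Hk.
  replace (gamma_sf k a - gamma_sf k b)
    with (minus (- gamma_sf k b) (- gamma_sf k a))
    by (unfold minus, plus, opp; simpl; ring).
  apply (is_RInt_derive (fun x => - gamma_sf k x)); intros x _.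
  - rewrite <- (Ropp_involutive (gamma_pdf k x)).
    apply (is_derive_opp (K := R_AbsRing) (V := R_NormedModule)).
    now apply is_derive_gamma_sf.
  - apply (ex_derive_continuous (K := R_AbsRing) (V := R_NormedModule)).
    unfold gamma_pdf. now auto_derive.
Qed.

Lemma gamma_sf_le_1 (k : nat) (a : R) : (1 <= k)%nat -> 0 <= a -> gamma_sf k a <= 1.
Proof.
  intros Hk Ha.
  pose proof (is_RInt_gamma_pdf k 0 a Hk) as Hint.
  assert (Hpos : 0 <= RInt (gamma_pdf k) 0 a).
  { apply RInt_ge_0; [exact Ha | now exists (gamma_sf k 0 - gamma_sf k a) |].
    intros x Hx. apply gamma_pdf_ge0. lra. }
  rewrite (is_RInt_unique _ _ _ _ Hint), gamma_sf_0 in Hpos. lra.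
Qed.

Lemma prob_abs_dev_le_le (k : nat) (y : R) :
  (1 <= k)%nat -> 0 <= y -> prob_abs_dev_le k y <= 1 - gamma_sf k (1 + y).
Proof.
  intros Hk Hy. unfold prob_abs_dev_le.
  destruct (Rlt_dec y 0) as [Hneg | _]; [lra |].
  set (a := Rmax 0 (1 - y)).
  assert (Ha : 0 <= a <= 1 + y) by (split; [apply Rmax_l | apply Rmax_lub; lra]).
  assert (Hint : is_RInt (gamma_kk_density k) a (1 + y)
                         (gamma_sf k a - gamma_sf k (1 + y))).
  { apply (is_RInt_ext (gamma_pdf k)); [| now apply is_RInt_gamma_pdf].
    intros x Hx. rewrite Rmin_left in Hx by lra.
    unfold gamma_kk_density. destruct (Rle_dec x 0); [lra | reflexivity]. }
  rewrite (is_RInt_unique _ _ _ _ Hint).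
  pose proof (gamma_sf_le_1 k a Hk (proj1 Ha)). lra.
Qed.

Lemma gamma_sf_ge_window (k : nat) (a w m : R) :
  (1 <= k)%nat -> 0 <= a -> 0 < w ->
  (forall t, a < t < a + w -> m <= gamma_pdf k t) -> w * m <= gamma_sf k a.
Proof.
  intros Hk Ha Hw Hm.
  pose proof (is_RInt_gamma_pdf k a (a + w) Hk) as Hint.
  assert (Hle : RInt (fun _ => m) a (a + w) <= RInt (gamma_pdf k) a (a + w)).
  { apply RInt_le; [lra | apply ex_RInt_const | eexists; exact Hint | exact Hm]. }
  rewrite RInt_const, (is_RInt_unique _ _ _ _ Hint) in Hle.
  change (scal ?u ?v) with (u * v) in Hle.
  replace (a + w - a) with w in Hle by ring.
  pose proof (gamma_sf_ge0 k (a + w) ltac:(lra)). lra.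
Qed.

Lemma gamma_pdf_eq_exp (n : nat) (t : R) : 0 < t ->
  gamma_pdf (S n) t =
  exp (INR (S n) * ln (INR (S n)) + INR n * ln t - INR (S n) * t - ln (INR (fact n))).
Proof.
  intros Ht. pose proof (INR_fact_lt_0 n) as Hfact.
  assert (HK : 0 < INR (S n)) by (apply lt_0_INR; lia).
  unfold gamma_pdf, Rminus. rewrite Nat.sub_succ, Nat.sub_0_r.
  rewrite !exp_plus, (exp_Ropp (ln _)), exp_ln by exact Hfact.
  rewrite <- !ln_pow, !exp_ln by first [assumption | apply pow_lt; assumption].
  replace (- (INR (S n) * t)) with (- INR (S n) * t) by ring.
  field. lra.
Qed.

Lemma gamma_pdf_ge (k : nat) (t : R) : (1 <= k)%nat -> 0 < t ->
  exp (ln (INR k) / 2 - 1 - INR k * (t - 1 - ln t) - ln t) <= gamma_pdf k t.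
Proof.
  intros Hk Ht. destruct k as [| n]; [lia |].
  rewrite gamma_pdf_eq_exp by exact Ht. apply exp_le_exp.
  pose proof (ln_fact_le n). rewrite S_INR. nra.
Qed.

Lemma gamma_sf_ge_exp (k : nat) (y w phi : R) :
  (1 <= k)%nat -> 0 <= y -> 0 < w ->
  (forall t, 1 + y < t < 1 + y + w -> t - 1 - ln t <= phi) ->
  exp (ln w + ln (INR k) / 2 - 1 - INR k * phi - (y + w)) <= gamma_sf k (1 + y).
Proof.
  intros Hk Hy Hw Hphi.
  set (e := ln (INR k) / 2 - 1 - INR k * phi - (y + w)).
  replace (ln w + ln (INR k) / 2 - 1 - INR k * phi - (y + w)) with (ln w + e)
    by (unfold e; ring).
  rewrite exp_plus, exp_ln by exact Hw.
  apply gamma_sf_ge_window; [exact Hk | lra | exact Hw |].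
  intros t Ht.
  eapply Rle_trans; [apply exp_le_exp | apply gamma_pdf_ge; [exact Hk | lra]].
  pose proof (ln_le_sub_1 t ltac:(lra)).
  pose proof (Rmult_le_compat_l (INR k) _ _ (pos_INR k) (Hphi t Ht)).
  unfold e. lra.
Qed.

Lemma gamma_sf_gt_exp_gaussian_regime (k : nat) (L y : R) :
  (1 <= k)%nat -> 0 <= y <= / 8 -> INR k * y ^ 2 <= L / 64 ->
  exp (-4 - L) < gamma_sf k (1 + y).
Proof.
  intros Hk Hy HyL.
  assert (HK : 1 <= INR k) by (apply (le_INR 1) in Hk; exact Hk).
  set (K := INR k) in *. set (s := sqrt K). set (w := / s).
  assert (Hss : s * s = K) by (apply sqrt_sqrt; lra).
  assert (Hs : 1 <= s) by (rewrite <- sqrt_1; apply sqrt_le_1_alt; lra).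
  assert (Hsw : s * w = 1) by (unfold w; field; lra).
  assert (Hw : 0 < w <= 1) by (apply Rinv_in_0_1; lra).
  assert (Hlnw : ln w = - (ln K / 2)).
  { unfold w. rewrite ln_Rinv, <- Hss, ln_mult by lra. field. }
  eapply Rlt_le_trans;
    [| apply (gamma_sf_ge_exp k y w ((y + w) ^ 2 / 2)); [exact Hk | lra | lra |]].
  - apply exp_increasing. rewrite Hlnw.
    assert (Hsq : K * (y + w) ^ 2 = K * y ^ 2 + 2 * (s * y) + 1).
    { rewrite <- Hss. replace (s * s * (y + w) ^ 2) with
        (s * s * y ^ 2 + 2 * (s * w) * (s * y) + (s * w) * (s * w)) by ring.
      rewrite Hsw. ring. }
    assert (2 * (s * y) <= K * y ^ 2 + 1) by (pose proof (pow2_ge_0 (s * y - 1)); nra).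
    fold K. nra.
  - intros t Ht. pose proof (sub_ln_le_sq t ltac:(lra)). nra.
Qed.

Lemma gamma_sf_gt_exp_exponential_regime (k : nat) (L y : R) :
  (1 <= k)%nat -> 0 <= y -> INR k <= L -> INR k * y <= L / 8 ->
  exp (-4 - L) < gamma_sf k (1 + y).
Proof.
  intros Hk Hy HKL HyL.
  assert (HK : 1 <= INR k) by (apply (le_INR 1) in Hk; exact Hk).
  set (K := INR k) in *. set (w := / K).
  assert (HKw : K * w = 1) by (unfold w; field; lra).
  assert (Hw : 0 < w <= 1) by (apply Rinv_in_0_1; lra).
  assert (Hlnw : ln w = - ln K) by (apply ln_Rinv; lra).
  eapply Rlt_le_trans;
    [| apply (gamma_sf_ge_exp k y w (y + w)); [exact Hk | lra | lra |]].
  - apply exp_increasing. rewrite Hlnw.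
    pose proof (ln_le_sub_1 K ltac:(lra)).
    assert (y <= K * y) by nra.
    fold K. nra.
  - intros t Ht. pose proof (ln_ge_0 t ltac:(lra)). lra.
Qed.

Lemma gamma_sf_gt_exp (k : nat) (L y : R) :
  (1 <= k)%nat -> 0 < L -> 0 <= y -> y < (sqrt (L / INR k) + L / INR k) / 16 ->
  exp (-4 - L) < gamma_sf k (1 + y).
Proof.
  intros Hk HL Hy Hyr.
  assert (HK : 1 <= INR k) by (apply (le_INR 1) in Hk; exact Hk).
  set (K := INR k) in *. set (r := sqrt (L / K)) in *.
  assert (Hr : 0 <= r) by apply sqrt_pos.
  assert (Hrr : r * r = L / K) by (apply sqrt_sqrt, Rlt_le, Rdiv_lt_0_compat; lra).
  assert (HLr : L = K * (r * r)) by (rewrite Hrr; field; lra).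
  rewrite <- Hrr in Hyr.
  destruct (Rle_lt_dec r 1) as [Hr1 | Hr1].
  - assert (Hyr8 : y < r / 8) by nra.
    apply gamma_sf_gt_exp_gaussian_regime; [exact Hk | lra |].
    fold K. rewrite HLr. assert (y ^ 2 <= r * r / 64) by nra. nra.
  - assert (Hyr8 : y < r * r / 8) by nra.
    assert (1 < r * r) by nra.
    apply gamma_sf_gt_exp_exponential_regime; [exact Hk | exact Hy | |];
      fold K; rewrite HLr; nra.
Qed.

Lemma tail_le_of_prob_abs_dev_ge (k : nat) (delta y : R) :
  (1 <= k)%nat -> delta < 2 -> prob_abs_dev_le k y >= 1 - delta / 2 ->
  0 <= y /\ gamma_sf k (1 + y) <= delta / 2.
Proof.
  intros Hk Hdelta Hy.
  assert (Hy0 : 0 <= y).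
  { apply Rnot_lt_le. intros Hneg. unfold prob_abs_dev_le in Hy.
    destruct (Rlt_dec y 0); [lra | contradiction]. }
  split; [exact Hy0 |].
  pose proof (prob_abs_dev_le_le k y Hk Hy0). lra.
Qed.

Theorem lemma5 :
  exists c1 c2 : R,
    0 < c1 <= 1 /\ 0 < c2 <= 2 /\
    forall (k : nat) (delta : R),
      (1 <= k)%nat -> 0 < delta < 1 ->
      Rbar_le
        (Finite (c1 * (sqrt (Rmax 0 (ln (c2 / delta)) / INR k)
                       + ln (c2 / delta) / INR k)))
        (V k delta).
Proof.
  exists (/ 16), (2 * exp (-4)).
  assert (He4 : 0 < exp (-4) <= 1).
  { split; [apply exp_pos | rewrite <- exp_0; apply exp_le_exp; lra]. }
  split; [lra |]. split; [lra |].
  intros k delta Hk Hdelta.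
  set (L := ln (2 * exp (-4) / delta)).
  assert (Hhalf : delta / 2 = exp (-4 - L)).
  { unfold L, Rminus.
    rewrite exp_plus, exp_Ropp, exp_ln by (apply Rdiv_lt_0_compat; lra).
    field. lra. }
  apply Glb_Rbar_correct. intros y Hy. simpl.
  destruct (tail_le_of_prob_abs_dev_ge k delta y Hk ltac:(lra) Hy) as [Hy0 Htail].
  apply Rnot_lt_le. intros Hlt.
  destruct (Rle_dec L 0) as [HL | HL].
  - rewrite Rmax_left, Rdiv_0_l, sqrt_0 in Hlt by exact HL.
    assert (L / INR k <= 0).
    { apply Rmult_le_0_r; [exact HL |].
      apply Rlt_le, Rinv_0_lt_compat, lt_0_INR. lia. }
    lra.
  - rewrite Rmax_right in Hlt by lra.
    pose proof (gamma_sf_gt_exp k L y Hk ltac:(lra) Hy0 ltac:(lra)). lra.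
Qed.
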